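(* Let $n\geq 3$ and let $k\in\mathbb{Z}_n$ with $k\neq 0$ and $2k\not\equiv 0\pmod n$. Let $C$ be a subset of the vertex set of the generalized Petersen graph $\mathrm{GP}(n,k)$. Then $C$ is a perfect code in $\mathrm{GP}(n,k)$ if and only if $n\equiv 0\pmod 4$, $k\equiv 1\pmod 2$, and $$C=\{u_{4i+j},\,v_{4i+j+2}\mid i\in\mathbb{Z}_n\}$$ for some $j\in\{0,1,2,3\}$ (indices taken modulo $n$).
   Context: For an integer $n\geq 3$ and a nonzero $k\in\mathbb{Z}_n$, the generalized Petersen graph $\mathrm{GP}(n,k)$ is the simple graph with vertex set $\{u_i,v_i\mid i\in\mathbb{Z}_n\}$ ($2n$ vertices) and edges $u_iu_{i+1}$, $u_iv_i$, $v_iv_{i+k}$ for all $i\in\mathbb{Z}_n$ (all indices modulo $n$). Standing assumption: $2k\not\equiv 0\pmod n$, so that $\mathrm{GP}(n,k)$ is 3-regular. Since $k$ is only defined modulo $n$, a congruence such as $k\equiv 1\pmod 2$ with $n$ even is well defined. A perfect code in a graph $\Gamma$ is an independent set $C\subseteq V(\Gamma)$ such that every vertex not in $C$ is adjacent to exactly one vertex of $C$. *)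

From mathcomp Require Import all_boot.
Set Implicit Arguments. Unset Strict Implicit. Unset Printing Implicit Defensive.

(* The parameter k : nat is a representative of k in Z_n; all indices are
   taken modulo n. *)
Definition gp_vertex (n : nat) := (bool * 'I_n)%type.

Definition u_ (n : nat) (i : 'I_n) : gp_vertex n := (false, i).
Definition v_ (n : nat) (i : 'I_n) : gp_vertex n := (true, i).

Definition gp_adj (n k : nat) (x y : gp_vertex n) : bool :=
  match x, y with
  | (false, i), (false, j) => (j == (i + 1) %% n :> nat) || (i == (j + 1) %% n :> nat)
  | (false, i), (true, j) => i == j
  | (true, i), (false, j) => i == j
  | (true, i), (true, j) => (j == (i + k) %% n :> nat) || (i == (j + k) %% n :> nat)
  end.

Definition perfect_code (n k : nat) (C : {set gp_vertex n}) : Prop :=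
  (forall x y, x \in C -> y \in C -> ~~ gp_adj k x y) /\
  (forall x, x \notin C -> #|[set y in C | gp_adj k x y]| = 1).

Definition gp_code (n j : nat) : {set gp_vertex n} :=
  [set x : gp_vertex n |
     [exists i : 'I_n,
        if x.1 then (x.2 == (4 * i + j + 2) %% n :> nat)
        else (x.2 == (4 * i + j) %% n :> nat)]].

From mathcomp Require Import all_boot zify.
Set Implicit Arguments. Unset Strict Implicit. Unset Printing Implicit Defensive.

(* A perfect code meets every closed neighbourhood exactly once.  Reading C as two
   n-periodic 0/1 sequences f (outer vertices u) and g (inner vertices v) gives
     f m + f (m+1) + f (m+2) + g (m+1) = 1   and   g m + g (m+k) + g (m+2k) + f (m+k) = 1.
   A local analysis in the lattice spanned by the steps 1 and k shows that C contains
   no two consecutive v's and no two u's at distance 3; hence u_p in C forces u_{p+4}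
   in C, so f is the indicator of one residue class mod 4, 4 divides n, g is f shifted
   by 2, and the second equation at a v in C rules out even k.  Conversely, for odd k
   the two same-side neighbours of a vertex and the vertex itself cover three residues
   mod 4; the fourth is the residue served from the other side. *)

Lemma perfect_code_closed_nbhdP (T : finType) (e : rel T) (C : {set T}) :
  ((forall x y, x \in C -> y \in C -> ~~ e x y) /\
   (forall x, x \notin C -> #|[set y in C | e x y]| = 1)) <->
  (forall x, (x \in C) + #|[set y in C | e x y]| = 1).
Proof.
split=> [[indep dom] x | cover].
- case: (boolP (x \in C)) => Cx; last by rewrite dom.
  suff -> : [set y in C | e x y] = set0 by rewrite cards0.
  apply/setP => y; rewrite !inE; apply/andP => -[Cy exy].
  by move: (indep x y Cx Cy); rewrite exy.
- split=> [x y Cx Cy | x Cx]; last by have := cover x; rewrite (negbTE Cx).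
  apply/negP => exy; have := cover x; rewrite Cx.
  suff : 0 < #|[set y in C | e x y]| by lia.
  by apply/card_gt0P; exists y; rewrite inE Cy exy.
Qed.

Lemma card_set_seq (T : finType) (C : {set T}) (P : pred T) (s : seq T) :
  uniq s -> (forall y, P y = (y \in s)) -> #|[set y in C | P y]| = count (mem C) s.
Proof.
move=> s_uniq Ps.
have -> : [set y in C | P y] = [set y in [seq z <- s | z \in C]].
  by apply/setP => y; rewrite !inE mem_filter Ps.
by rewrite cardsE (card_uniqP _) ?size_filter // filter_uniq.
Qed.

Lemma modn_lt_double x n : x < n + n -> x %% n = if x < n then x else x - n.
Proof.
move=> x_lt; case: ltnP => [|le_nx]; first exact: modn_small.
by rewrite -{1}(subnK le_nx) modnDr modn_small //; lia.
Qed.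

Lemma eq_modn_shift n i j d : i < n -> j < n -> d <= n ->
  (i == (j + d) %% n) = (j == (i + n - d) %% n).
Proof.
move=> lt_in lt_jn le_dn.
rewrite (modn_lt_double (x := j + d)) 1?(modn_lt_double (x := i + n - d)); try lia.
by do 2 case: ifP => ?; apply/eqP/eqP; lia.
Qed.

Lemma nat_of_bool_inj : injective nat_of_bool.
Proof. by do 2 case. Qed.

Lemma periodicM (h : nat -> nat) n : (forall m, h (m + n) = h m) ->
  forall t m, h (m + t * n) = h m.
Proof.
move=> h_per; elim=> [|t IHt] m; first by rewrite mul0n addn0.
by rewrite mulSnr addnA h_per IHt.
Qed.

Section Lattice.
Variables F G : nat -> nat -> nat.
Hypotheses (F_row : forall a b, F a b + F a.+1 b + F a.+2 b + G a.+1 b = 1)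
           (G_col : forall a b, G a b + G a b.+1 + G a b.+2 + F a b.+1 = 1).

(* F a b and G a b stand for u and v at index q + a + b k: rows are the closed
   neighbourhoods of the u's, columns those of the v's.  If v_p, v_{p+1} are in C
   (G 4 4, G 5 4), then u_{p+2-k} and u_{p+2+k} are forced into C and v_{p+2} is
   left undominated. *)
Lemma lattice_G_no_consecutive : G 4 4 + G 5 4 <= 1.
Proof.
move: (G_col 4 2) (G_col 4 4) (G_col 5 2) (F_row 4 4) (G_col 5 4)
      (F_row 4 3) (F_row 4 5) (G_col 6 2) (G_col 6 3) (F_row 5 5).
lia.
Qed.

(* Propagation from u_p, u_{p+3} (F 4 4, F 7 4), with one case split on u_{p-k},
   ends at a vertex dominated twice or not at all. *)
Lemma lattice_F_no_gap3 (G_no_consecutive : forall a b, G a b + G a.+1 b <= 1) :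
  F 4 4 + F 7 4 <= 1.
Proof.
move: (F_row 2 3) (G_col 3 3) (G_col 3 4) (G_col 4 2) (F_row 3 4) (G_col 4 3) (F_row 3 5)
      (F_row 4 3) (F_row 4 4) (G_col 5 3) (F_row 4 5) (F_row 5 4) (G_col 7 3) (F_row 3 2)
      (F_row 4 2) (G_col 6 1) (G_col 6 2) (F_row 6 2) (F_row 6 3) (G_col 7 2)
      (G_no_consecutive 4 2).
lia.
Qed.

End Lattice.

Section ExactCoverSequences.
Variables (n k : nat) (f g : nat -> nat).
Hypotheses (n_gt0 : 0 < n)
  (f_periodic : forall m, f (m + n) = f m) (g_periodic : forall m, g (m + n) = g m)
  (f_row : forall m, f m + f m.+1 + f m.+2 + g m.+1 = 1)
  (g_row : forall m, g m + g (m + k) + g (m + k + k) + f (m + k) = 1).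

Lemma f_le1 m : f m <= 1. Proof. by have := f_row m; lia. Qed.

Let lattice_f q a b := f (q + a + b * k).
Let lattice_g q a b := g (q + a + b * k).

Lemma lattice_rows q a b :
  lattice_f q a b + lattice_f q a.+1 b + lattice_f q a.+2 b + lattice_g q a.+1 b = 1.
Proof. by rewrite /lattice_f /lattice_g !addnS !addSn f_row. Qed.

Lemma lattice_cols q a b :
  lattice_g q a b + lattice_g q a b.+1 + lattice_g q a b.+2 + lattice_f q a b.+1 = 1.
Proof. by rewrite /lattice_f /lattice_g !mulSnr !addnA g_row. Qed.

(* Moving the origin back by a multiple of the period keeps every lattice index
   nonnegative. *)
Let lattice_origin p := p + k.+1 * 4 * n - k.+1 * 4.

Lemma lattice_originE (h : nat -> nat) (h_periodic : forall m, h (m + n) = h m) p r :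
  h (lattice_origin p + (4 + r) + 4 * k) = h (p + r).
Proof.
rewrite -(periodicM h_periodic (k.+1 * 4) (p + r)) /lattice_origin.
by move: (leq_pmulr (k.+1 * 4) n_gt0) => ?; congr (h _); lia.
Qed.

Lemma g_no_consecutive p : g p + g p.+1 <= 1.
Proof.
have := lattice_G_no_consecutive (lattice_rows (lattice_origin p)) (lattice_cols _).
rewrite /lattice_g (lattice_originE g_periodic p 0) (lattice_originE g_periodic p 1).
by rewrite addn0 addn1.
Qed.

Lemma f_no_gap3 p : f p + f p.+3 <= 1.
Proof.
have G_no_consecutive a b :
    lattice_g (lattice_origin p) a b + lattice_g (lattice_origin p) a.+1 b <= 1.
  by rewrite /lattice_g addnS addSn g_no_consecutive.
have := lattice_F_no_gap3 (lattice_rows _) (lattice_cols _) G_no_consecutive.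
rewrite /lattice_f (lattice_originE f_periodic p 0) (lattice_originE f_periodic p 3).
by rewrite addn0 addn3.
Qed.

Lemma f_step4 p : f p = 1 -> f p.+4 = 1.
Proof.
move: (f_row p) (f_row p.+1) (f_row p.+2) (g_no_consecutive p.+2) (f_no_gap3 p).
lia.
Qed.

Lemma f_step4n p t : f p = 1 -> f (p + 4 * t) = 1.
Proof.
move=> fp; elim: t => [|t IHt]; first by rewrite addn0.
by rewrite mulnS addnCA add4n f_step4.
Qed.

Lemma f_one_dvd4 p r : f p = 1 -> f (p + r) = 1 -> 4 %| r.
Proof.
elim/ltn_ind: r p => r IHr p fp fpr.
have [lt_r4 | le4r] := ltnP r 4.
- move: (f_row p) (f_no_gap3 p).
  by case: r {IHr} lt_r4 fpr => [|[|[|[|r]]]] //; rewrite ?addn1 ?addn2 ?addn3; lia.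
- rewrite -(subnK le4r) dvdn_addl // (IHr _ _ _ (f_step4 fp)) //; first lia.
  by rewrite -addn4 -addnA subnKC.
Qed.

(* If u_0, u_1, u_2 are all outside C then v_1 is in C, so v_{1+k} is not,
   and the closed neighbourhood of u_{1+k} forces u_k or u_{k+2} into C. *)
Lemma exists_f_one : exists p, f p = 1.
Proof.
have [f0 | f0] := eqVneq (f 0) 1; first by exists 0.
have [f1 | f1] := eqVneq (f 1) 1; first by exists 1.
have [f2 | f2] := eqVneq (f 2) 1; first by exists 2.
have [fk | fk] := eqVneq (f k) 1; first by exists k.
have [fk2 | fk2] := eqVneq (f k.+2) 1; first by exists k.+2.
move: (f_row 0) (f_row k) (g_row 1) (f_le1 0) (f_le1 1) (f_le1 2) (f_le1 k) (f_le1 k.+2).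
rewrite add1n addSn; lia.
Qed.

Lemma dvd4_period : 4 %| n.
Proof.
have [p fp] := exists_f_one.
by apply: (f_one_dvd4 fp); rewrite f_periodic.
Qed.

Lemma f_period4 m : f m.+4 = f m.
Proof.
have n_ge4 : 4 <= n by apply: dvdn_leq dvd4_period.
have backward : f m.+4 = 1 -> f m = 1.
  move=> fm4; rewrite -f_periodic -(f_step4n (n %/ 4).-1 fm4).
  by congr f; move: dvd4_period; rewrite /dvdn; lia.
by move: (f_le1 m) (f_le1 m.+4) (@f_step4 m) backward; lia.
Qed.

Lemma f_mod4 m : f m = f (m %% 4).
Proof.
rewrite {1}(divn_eq m 4) addnC; elim: (m %/ 4) => [|t IHt]; first by rewrite addn0.
by rewrite mulSnr addnA addn4 f_period4.
Qed.

Lemma f_residue : exists2 j, j < 4 & forall m, f m = (m %% 4 == j).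
Proof.
have [p fp] := exists_f_one.
exists (p %% 4); first exact: ltn_pmod.
move=> m; rewrite f_mod4; move: fp; rewrite f_mod4.
move: (f_row 0) (f_row 1) (f_no_gap3 0) (f_le1 0) (f_le1 1) (f_le1 2) (f_le1 3).
move: (ltn_pmod m (isT : 0 < 4)) (ltn_pmod p (isT : 0 < 4)).
by case: (m %% 4) => [|[|[|[|]]]]; case: (p %% 4) => [|[|[|[|]]]]; lia.
Qed.

Lemma g_residue j : (forall m, f m = (m %% 4 == j)) -> j < 4 ->
  forall m, g m = (m %% 4 == (j + 2) %% 4).
Proof.
move=> f_res lt_j4 m; rewrite -g_periodic.
have -> : m + n = (m + n).-1.+1 by lia.
move: (f_row (m + n).-1) dvd4_period; rewrite !f_res /dvdn; lia.
Qed.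

Lemma odd_second_step : odd k.
Proof.
have [j lt_j4 f_res] := f_residue.
move: (g_row (j + 2)); rewrite !(g_residue f_res) // f_res; lia.
Qed.

End ExactCoverSequences.

Definition gp_step (k : nat) (b : bool) : nat := if b then k else 1.

Definition code_at n (C : {set gp_vertex n}) (b : bool) (m : nat) : bool :=
  [exists i : 'I_n, (val i == m %% n) && ((b, i) \in C)].

Lemma code_atE n (C : {set gp_vertex n}) b (i : 'I_n) m :
  val i = m %% n -> code_at C b m = ((b, i) \in C).
Proof.
move=> im; apply/existsP/idP => [[j /andP[/eqP jm Cj]] | Ci]; last by exists i; rewrite im eqxx.
by rewrite (_ : i = j) //; apply: val_inj; rewrite /= im jm.
Qed.

Lemma code_at_mod n (C : {set gp_vertex n}) b m m' :
  m = m' %[mod n] -> code_at C b m = code_at C b m'.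
Proof. by rewrite /code_at => ->. Qed.

Section Neighbourhoods.
Variables (n k : nat).
Hypotheses (n_gt2 : 2 < n) (k_gt0 : 0 < k) (k_lt_n : k < n) (n_ndvd_k2 : ~~ (n %| k.*2)).

Lemma gp_step_bounds b : 0 < gp_step k b < n /\ (gp_step k b).*2 != n.
Proof.
case: b => /=; last by lia.
by split; [lia | apply: contraNneq n_ndvd_k2 => ->].
Qed.

Lemma gp_adjE b c (i j : 'I_n) :
  gp_adj k (b, i) (c, j) =
  if b == c then (j == (i + gp_step k b) %% n :> nat) || (j == (i + n - gp_step k b) %% n :> nat)
  else i == j.
Proof.
have [/andP[d_gt0 d_lt_n] _] := gp_step_bounds b.
by case: b c d_gt0 d_lt_n => -[] //= *; rewrite (@eq_modn_shift n i j) //; lia.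
Qed.

Lemma closed_nbhd_count (C : {set gp_vertex n}) b (i : 'I_n) :
  ((b, i) \in C) + #|[set y in C | gp_adj k (b, i) y]| =
  code_at C b i + code_at C b (i + gp_step k b) + code_at C b (i + n - gp_step k b)
  + code_at C (~~ b) i.
Proof.
have [/andP[d_gt0 d_lt_n] d2_neq_n] := gp_step_bounds b.
set d := gp_step k b in d_gt0 d_lt_n d2_neq_n *.
have n_gt0 : 0 < n by lia.
have lt_in := ltn_ord i.
pose ord m : 'I_n := Ordinal (ltn_pmod m n_gt0).
rewrite (@card_set_seq _ C _ [:: (b, ord (i + d)); (b, ord (i + n - d)); (~~ b, i)]).
- rewrite /= (@code_atE _ C b i) ?modn_small // (@code_atE _ C _ (ord (i + d))) //.
  rewrite (@code_atE _ C _ (ord (i + n - d))) // (@code_atE _ C _ i) ?modn_small //; lia.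
- have bNb : (b == ~~ b) = false by case: (b).
  rewrite /= !inE !xpair_eqE bNb /= orbF andbT -val_eqE /=.
  rewrite (modn_lt_double (x := i + d)) 1?(modn_lt_double (x := i + n - d)); try lia.
  by do 2 case: ifP => ?; apply/eqP; lia.
- move=> [c j]; rewrite inE gp_adjE !inE !xpair_eqE -!val_eqE /=.
  by rewrite /d; case: (b) c => -[] /=; rewrite ?orbF // eq_sym.
Qed.

Lemma perfect_code_nbhd_sum (C : {set gp_vertex n}) : perfect_code k C ->
  forall b m, code_at C b m + code_at C b (m + gp_step k b)
              + code_at C b (m + gp_step k b + gp_step k b)
              + code_at C (~~ b) (m + gp_step k b) = 1.
Proof.
move=> /perfect_code_closed_nbhdP cover b m.
have [/andP[d_gt0 d_lt_n] _] := gp_step_bounds b.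
set d := gp_step k b in d_gt0 d_lt_n *.
have n_gt0 : 0 < n by lia.
have := cover (b, Ordinal (ltn_pmod (m + d) n_gt0)); rewrite closed_nbhd_count /= -/d.
rewrite (@code_at_mod _ C _ (_ + d) (m + d + d)) ?modnDml //.
rewrite !(@code_at_mod _ C _ ((m + d) %% n) (m + d)) ?modn_mod //.
rewrite (@code_at_mod _ C _ (_ + n - d) m); first lia.
by rewrite -addnBA 1?ltnW // modnDml addnBA 1?ltnW // addnAC addnK modnDr.
Qed.

End Neighbourhoods.

Lemma perfect_code_structure n k (C : {set gp_vertex n}) :
  2 < n -> 0 < k < n -> ~~ (n %| k.*2) -> perfect_code k C ->
  [/\ 4 %| n, odd k &
      exists2 j, j < 4 & forall b m, code_at C b m = (m %% 4 == (j + 2 * b) %% 4)].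
Proof.
move=> n_gt2 /andP[k_gt0 k_lt_n] n_ndvd_k2 C_perfect; have n_gt0 : 0 < n by lia.
pose f m : nat := code_at C false m; pose g m : nat := code_at C true m.
have periodic b m : code_at C b (m + n) = code_at C b m :> nat.
  by rewrite (@code_at_mod _ _ _ _ m) // modnDr.
have nbhd_sum := perfect_code_nbhd_sum n_gt2 k_gt0 k_lt_n n_ndvd_k2 C_perfect.
have f_row m : f m + f m.+1 + f m.+2 + g m.+1 = 1.
  by have := nbhd_sum false m; rewrite /= !addn1.
have g_row m : g m + g (m + k) + g (m + k + k) + f (m + k) = 1 by exact: nbhd_sum true m.
have [j lt_j4 f_res] := f_residue n_gt0 (periodic false) (periodic true) f_row g_row.
have g_res := g_residue n_gt0 (periodic false) (periodic true) f_row g_row f_res lt_j4.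
split; [exact: dvd4_period n_gt0 (periodic false) (periodic true) f_row g_row
      | exact: odd_second_step n_gt0 (periodic false) (periodic true) f_row g_row
      | exists j => // b m].
apply: nat_of_bool_inj.
by case: b; [rewrite g_res | rewrite f_res addn0 (modn_small lt_j4)].
Qed.

Lemma gp_code_mem n j b (i : 'I_n) : 4 %| n -> j < 4 ->
  ((b, i) \in gp_code n j) = (i %% 4 == (j + 2 * b) %% 4).
Proof.
rewrite /dvdn => /eqP n4 lt_j4; have lt_in := ltn_ord i.
rewrite inE /=; apply/existsP/eqP => [[t] | i_res].
- by case: b => /eqP ->; rewrite modn_dvdm ?/dvdn ?n4 //; lia.
- have lt_tn : (i + n - j - 2 * b) %/ 4 < n by lia.
  exists (Ordinal lt_tn) => /=.
  case: b i_res {lt_tn} => /= i_res.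
  + by rewrite (_ : 4 * _ + j + 2 = i + n) ?modnDr ?modn_small //; lia.
  + by rewrite (_ : 4 * _ + j = i + n) ?modnDr ?modn_small //; lia.
Qed.

Lemma code_at_gp_code n j b m : 0 < n -> 4 %| n -> j < 4 ->
  code_at (gp_code n j) b m = (m %% 4 == (j + 2 * b) %% 4).
Proof.
move=> n_gt0 dvd4n lt_j4.
by rewrite (@code_atE _ _ _ (Ordinal (ltn_pmod m n_gt0))) // gp_code_mem //= modn_dvdm.
Qed.

Lemma odd_step_residues n x d t : 4 %| n -> d <= n -> odd d ->
  (x == t %[mod 4]) + (x + d == t %[mod 4]) + (x + n - d == t %[mod 4])
  + (x == t + 2 %[mod 4]) = 1.
Proof.
rewrite /dvdn => /eqP n4 le_dn d_odd.
have -> : (x + n - d) %% 4 = (x %% 4 + (4 - d %% 4)) %% 4 by lia.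
rewrite -modnDm -(modnDml t 2).
have : d %% 4 \in [:: 1; 3] by rewrite !inE; lia.
move: (ltn_pmod x (isT : 0 < 4)) (ltn_pmod t (isT : 0 < 4)).
by case: (x %% 4) => [|[|[|[|]]]]; case: (t %% 4) => [|[|[|[|]]]];
  rewrite !inE => // _ _ /orP[] /eqP ->.
Qed.

Lemma gp_code_perfect n k j : 2 < n -> 0 < k < n -> ~~ (n %| k.*2) ->
  4 %| n -> odd k -> j < 4 -> perfect_code k (gp_code n j).
Proof.
move=> n_gt2 /andP[k_gt0 k_lt_n] n_ndvd_k2 dvd4n odd_k lt_j4.
apply/perfect_code_closed_nbhdP => -[b i].
have n_gt0 : 0 < n by lia.
have [/andP[_ d_lt_n] _] := gp_step_bounds n_gt2 k_gt0 k_lt_n n_ndvd_k2 b.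
rewrite closed_nbhd_count // !code_at_gp_code //.
have -> : (j + 2 * ~~ b) %% 4 = (j + 2 * b + 2) %% 4.
  by case: (b); rewrite /= ?muln0 ?muln1 ?addn0 // -addnA modnDr.
have d_odd : odd (gp_step k b) by case: (b).
exact: (@odd_step_residues n i (gp_step k b) (j + 2 * b) dvd4n (ltnW d_lt_n) d_odd).
Qed.

Theorem theorem1p1 (n k : nat) (C : {set gp_vertex n}) :
  3 <= n -> 0 < k < n -> ~~ (n %| k.*2) ->
  perfect_code k C <->
  [/\ n %% 4 = 0, odd k & exists2 j, j < 4 & C = gp_code n j].
Proof.
move=> n_gt2 k_bounds n_ndvd_k2.
split=> [C_perfect | [/eqP n4 odd_k [j lt_j4 ->]]]; last exact: gp_code_perfect.
have [dvd4n odd_k [j lt_j4 C_res]] := perfect_code_structure n_gt2 k_bounds n_ndvd_k2 C_perfect.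
split; [exact/eqP | by [] | exists j => //].
apply/setP => -[b i].
by rewrite gp_code_mem // -(code_atE C b (esym (modn_small (ltn_ord i)))) C_res.
Qed.
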